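(* Let $\mathfrak{g}$ be a nilpotent Lie algebra over $\mathbb{R}$ of dimension $2p+1$ admitting a contact form, i.e. a linear form $\omega\in\mathfrak{g}^*$ with $\omega\wedge(d\omega)^p\neq 0$, where $d\omega(X,Y)=-\omega([X,Y])$. Then $\mathfrak{g}$ is a one-dimensional central extension of a Lie algebra admitting an affine structure; that is, there is an exact sequence of Lie algebras $0\to V\to\mathfrak{g}\to\mathfrak{h}\to 0$ with $V$ one-dimensional and central in $\mathfrak{g}$, and $\mathfrak{h}$ admits an affine structure.
   Context: An affine structure on a Lie algebra $\mathfrak{h}$ over $\mathbb{R}$ is a bilinear map $\nabla:\mathfrak{h}\times\mathfrak{h}\to\mathfrak{h}$ such that for all $X,Y,Z\in\mathfrak{h}$: (1) $\nabla(X,Y)-\nabla(Y,X)=[X,Y]$, and (2) $\nabla(X,\nabla(Y,Z))-\nabla(Y,\nabla(X,Z))=\nabla([X,Y],Z)$. *)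

From HB Require Import structures.
From mathcomp Require Import all_boot all_order all_algebra all_fingroup.
From mathcomp Require Import reals.
Set Implicit Arguments. Unset Strict Implicit. Unset Printing Implicit Defensive.
Import GRing.Theory Num.Theory.
Local Open Scope ring_scope.

(* A finite-dimensional real Lie algebra of dimension n is modelled as the
   coordinate space 'cV[R]_n equipped with a bracket. *)
Definition is_lie_bracket (R : realType) (n : nat)
    (br : 'cV[R]_n -> 'cV[R]_n -> 'cV[R]_n) : Prop :=
  [/\ (forall (a : R) x y z, br (a *: x + y) z = a *: br x z + br y z),
      (forall (a : R) x y z, br z (a *: x + y) = a *: br z x + br z y),
      (forall x, br x x = 0) &
      (forall x y z, br x (br y z) + br y (br z x) + br z (br x y) = 0)].

Fixpoint iter_bracket (R : realType) (n : nat)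
    (br : 'cV[R]_n -> 'cV[R]_n -> 'cV[R]_n) (xs : seq 'cV[R]_n) (y : 'cV[R]_n)
    : 'cV[R]_n :=
  if xs is x :: xs' then br x (iter_bracket br xs' y) else y.

(* Nilpotent: some term g^k of the lower central series vanishes, i.e. all
   iterated brackets of length k+1 vanish (g^k is spanned by them). *)
Definition is_nilpotent (R : realType) (n : nat)
    (br : 'cV[R]_n -> 'cV[R]_n -> 'cV[R]_n) : Prop :=
  exists k : nat, forall (xs : seq 'cV[R]_n) y,
    size xs = k -> iter_bracket br xs y = 0.

Definition dform (R : realType) (n : nat)
    (br : 'cV[R]_n -> 'cV[R]_n -> 'cV[R]_n) (w : 'rV[R]_n)
    (x y : 'cV[R]_n) : R :=
  - (w *m br x y) 0 0.

(* (omega /\ (d omega)^p)(X_0, ..., X_{2p}), up to a nonzero normalising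
   constant (which is irrelevant for non-vanishing): the alternation of
   omega(X_0) * dω(X_1,X_2) * ... * dω(X_{2p-1},X_{2p}). *)
Definition contact_top_form (R : realType) (p : nat)
    (br : 'cV[R]_(p.*2.+1) -> 'cV[R]_(p.*2.+1) -> 'cV[R]_(p.*2.+1))
    (w : 'rV[R]_(p.*2.+1)) (X : 'I_(p.*2.+1) -> 'cV[R]_(p.*2.+1)) : R :=
  \sum_(s : 'S_(p.*2.+1))
     (-1) ^+ odd_perm s * ((w *m X (s ord0)) 0 0 *
       \prod_(i < p) dform br w (X (s (inord i.*2.+1))) (X (s (inord i.*2.+2)))).

Definition is_contact_form (R : realType) (p : nat)
    (br : 'cV[R]_(p.*2.+1) -> 'cV[R]_(p.*2.+1) -> 'cV[R]_(p.*2.+1))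
    (w : 'rV[R]_(p.*2.+1)) : Prop :=
  exists X : 'I_(p.*2.+1) -> 'cV[R]_(p.*2.+1), contact_top_form br w X != 0.

Definition is_affine_structure (R : realType) (m : nat)
    (br : 'cV[R]_m -> 'cV[R]_m -> 'cV[R]_m)
    (nabla : 'cV[R]_m -> 'cV[R]_m -> 'cV[R]_m) : Prop :=
  [/\ (forall (a : R) x y z, nabla (a *: x + y) z = a *: nabla x z + nabla y z),
      (forall (a : R) x y z, nabla z (a *: x + y) = a *: nabla z x + nabla z y),
      (forall x y, nabla x y - nabla y x = br x y) &
      (forall x y z, nabla x (nabla y z) - nabla y (nabla x z) = nabla (br x y) z)].

Definition admits_affine_structure (R : realType) (m : nat)
    (br : 'cV[R]_m -> 'cV[R]_m -> 'cV[R]_m) : Prop :=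
  exists nabla, is_affine_structure br nabla.

From mathcomp Require Import all_boot all_order all_algebra all_fingroup.
From mathcomp Require Import reals.
From mathcomp Require Import ring lra zify.
From Stdlib Require Import Classical FunctionalExtensionality.
Import GRing.Theory Num.Theory.
Local Open Scope ring_scope.
Set Implicit Arguments. Unset Strict Implicit. Unset Printing Implicit Defensive.

(* The centre of a nilpotent Lie algebra g is nontrivial; fix a nonzero central
   vector v.  The contact condition forces the radical of dω to be the line R v: a
   nonzero k with ω(k) = 0 and ι_k dω = 0 would make the alternating form
   ω ∧ (dω)^p vanish, because any 2p+1 vectors are linearly dependent modulo k.
   Hence on h = g / R v the 2-form Ω(a, b) = ω([a, b]) is well defined,
   nondegenerate and closed (by Jacobi), i.e. h is a symplectic Lie algebra, and
   Ω(∇_a b, c) = - Ω(b, [a, c]) defines an affine structure on h. *)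

Section LinearMap.
Variables (R : pzRingType) (U V : lmodType R) (f : U -> V).
Hypothesis f_lin : forall a x y, f (a *: x + y) = a *: f x + f y.

Lemma lin0 : f 0 = 0.
Proof.
have := f_lin 1 0 0; rewrite !scale1r addr0 => f0.
by apply: (@addrI _ (f 0)); rewrite -f0 addr0.
Qed.

Lemma linD x y : f (x + y) = f x + f y.
Proof. by have := f_lin 1 x y; rewrite !scale1r. Qed.

Lemma linZ a x : f (a *: x) = a *: f x.
Proof. by rewrite -[a *: x]addr0 f_lin lin0 addr0. Qed.

Lemma linN x : f (- x) = - f x.
Proof. by rewrite -scaleN1r linZ scaleN1r. Qed.

Lemma linB x y : f (x - y) = f x - f y.
Proof. by rewrite linD linN. Qed.

Lemma lin_sum (I : finType) (c : I -> R) (u : I -> U) :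
  f (\sum_i c i *: u i) = \sum_i c i *: f (u i).
Proof. by rewrite (big_morph f linD lin0); apply: eq_bigr => i _; rewrite linZ. Qed.
End LinearMap.

Lemma cV_sum_delta (R : pzRingType) n (x : 'cV[R]_n) :
  x = \sum_j x j 0 *: delta_mx j 0.
Proof.
apply/matrixP => i k; rewrite (ord1 k) summxE (bigD1 i) //= !mxE !eqxx mulr1.
by rewrite big1 ?addr0 // => j /negbTE ji; rewrite !mxE eq_sym ji mulr0.
Qed.

Lemma lin_functionalE (R : comPzRingType) n (L : 'cV[R]_n -> R) :
  (forall a x y, L (a *: x + y) = a * L x + L y) ->
  forall x, L x = \sum_j x j 0 * L (delta_mx j 0).
Proof.
(* a scalar-valued linear map is a linear map into the regular module R^o *)
by move=> L_lin x; rewrite {1}[x]cV_sum_delta (@lin_sum _ _ R^o L L_lin).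
Qed.

Section LieBracket.
Variables (R : realType) (n : nat) (br : 'cV[R]_n -> 'cV[R]_n -> 'cV[R]_n).
Hypothesis br_lie : is_lie_bracket br.

Lemma br_linl z a x y : br (a *: x + y) z = a *: br x z + br y z.
Proof. by case: br_lie. Qed.

Lemma br_linr z a x y : br z (a *: x + y) = a *: br z x + br z y.
Proof. by case: br_lie. Qed.

Lemma br_jacobi x y z : br x (br y z) + br y (br z x) + br z (br x y) = 0.
Proof. by case: br_lie. Qed.

Lemma brxx x : br x x = 0.
Proof. by case: br_lie. Qed.

Lemma br0l x : br 0 x = 0.
Proof. exact: (lin0 (f := br^~ x) (br_linl x)). Qed.

Lemma brDl x y z : br (x + y) z = br x z + br y z.
Proof. exact: (linD (f := br^~ z) (br_linl z)). Qed.

Lemma brDr x y z : br z (x + y) = br z x + br z y.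
Proof. exact: (linD (f := br z) (br_linr z)). Qed.

Lemma brZl a x z : br (a *: x) z = a *: br x z.
Proof. exact: (linZ (f := br^~ z) (br_linl z)). Qed.

Lemma brNl x z : br (- x) z = - br x z.
Proof. exact: (linN (f := br^~ z) (br_linl z)). Qed.

Lemma brNr x z : br z (- x) = - br z x.
Proof. exact: (linN (f := br z) (br_linr z)). Qed.

Lemma brC x y : br x y = - br y x.
Proof.
apply/eqP; rewrite -addr_eq0; apply/eqP.
by have := brxx (x + y); rewrite brDl !brDr !brxx add0r addr0.
Qed.
End LieBracket.

Lemma nilpotent_center_neq0 (R : realType) k
    (br : 'cV[R]_k.+1 -> 'cV[R]_k.+1 -> 'cV[R]_k.+1) :
  is_lie_bracket br -> is_nilpotent br -> exists v, v != 0 /\ forall x, br v x = 0.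
Proof.
move=> br_lie [N]; elim: N => [|N IH] nilN.
  have /matrixP/(_ 0 0)/eqP := nilN [::] (delta_mx 0 0) erefl.
  by rewrite !mxE eqxx oner_eq0.
case: (classic (exists xs y, size xs = N /\ iter_bracket br xs y != 0)) =>
    [[xs [y [size_xs nz]]] | none]; last first.
  apply: IH => xs y size_xs; apply/eqP/contraT => nz.
  by case: none; exists xs, y.
exists (iter_bracket br xs y); split=> // x.
have := nilN (x :: xs) y; rewrite /= size_xs => /(_ erefl) bx0.
by rewrite brC // bx0 oppr0.
Qed.

Lemma exists_relation_with_nonzero (K : fieldType) n (X : 'I_n -> 'cV[K]_n) k :
  k != 0 -> exists c j d, c j != 0 /\ \sum_i c i *: X i = d *: k.
Proof.
move=> k_neq0; pose M : 'M[K]_n := \matrix_(i, r) X i r 0.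
have [c c_neq0 [d cM]] : exists2 c : 'rV_n, c != 0 & exists d, c *m M = d *: k^T.
  have [/det0P [c c_neq0 cM0] | M_unit] := boolP (\det M == 0).
    by exists c => //; exists 0; rewrite cM0 scale0r.
  exists (k^T *m invmx M); last by exists 1; rewrite mulmxKV ?unitmxE ?unitfE // scale1r.
  apply: contraNneq k_neq0 => kM0; rewrite -trmx_eq0.
  by rewrite -(mulmxKV (_ : M \in unitmx) k^T) ?kM0 ?mul0mx // unitmxE unitfE.
have [j cj] : exists j, c 0 j != 0.
  apply/existsP; apply: contraR c_neq0 => /existsPn c0.
  by apply/eqP/rowP => j; rewrite mxE; apply/eqP/negPn/c0.
exists (c 0), j, d; split=> //; apply/matrixP => r s; rewrite (ord1 s).
have /matrixP/(_ 0 r) := cM; rewrite !mxE summxE => <-.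
by apply: eq_bigr => i _; rewrite !mxE.
Qed.

Section AlternatingForm.
Variables (K : fieldType) (n : nat) (T : ('I_n -> 'cV[K]_n) -> K).
Hypothesis T_lin : forall X j a y z, T [eta X with j |-> a *: y + z] =
  a * T [eta X with j |-> y] + T [eta X with j |-> z].
Hypothesis T_alt : forall X i j, i != j -> X i = X j -> T X = 0.

Lemma alternating_form_eq0 k : k != 0 ->
  (forall X j, T [eta X with j |-> k] = 0) -> forall X, T X = 0.
Proof.
move=> k_neq0 Tk0 X.
have [c [j [d [cj rel]]]] := exists_relation_with_nonzero X k_neq0.
pose Tj y := T [eta X with j |-> y]; have Tj_lin := T_lin X j.
suff /eqP : c j * T X = 0 by rewrite mulf_eq0 (negbTE cj) => /eqP.
have -> : c j * T X = Tj (\sum_i c i *: X i).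
  rewrite (@lin_sum _ _ K^o Tj Tj_lin) (bigD1 j) //= big1 ?addr0 => [|i ij].
    by congr (_ * T _); apply: functional_extensionality => i /=; case: eqP => // ->.
  by rewrite /Tj (@T_alt _ i j) ?scaler0 //= eqxx (negbTE ij).
by rewrite rel (@linZ _ _ K^o Tj Tj_lin) /Tj Tk0 scaler0.
Qed.
End AlternatingForm.

Definition ev (R : pzRingType) n (w : 'rV[R]_n) (x : 'cV[R]_n) : R := (w *m x) 0 0.

Lemma evD (R : pzRingType) n (w : 'rV[R]_n) x y : ev w (x + y) = ev w x + ev w y.
Proof. by rewrite /ev mulmxDr mxE. Qed.

Lemma evZ (R : comPzRingType) n (w : 'rV[R]_n) a x : ev w (a *: x) = a * ev w x.
Proof. by rewrite /ev -scalemxAr mxE. Qed.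

Lemma evN (R : pzRingType) n (w : 'rV[R]_n) x : ev w (- x) = - ev w x.
Proof. by rewrite /ev mulmxN mxE. Qed.

Lemma ev0 (R : pzRingType) n (w : 'rV[R]_n) : ev w 0 = 0.
Proof. by rewrite /ev mulmx0 mxE. Qed.

Lemma contact_slot_cases p (k : 'I_p.*2.+1) :
  k = 0 :> nat \/ exists i : 'I_p, k = i.*2.+1 :> nat \/ k = i.*2.+2 :> nat.
Proof.
case: k => [[|k] lt_k]; [by left | right].
have lt_half : (k./2 < p)%N by rewrite ltn_half_double; lia.
exists (Ordinal lt_half); have := odd_double_half k.
by case: (odd k) => /= hk; [right | left]; lia.
Qed.

Lemma eta_perm_off (I : finType) (V : Type) (X : I -> V) j y (s : {perm I}) :
  forall k, k != (s^-1 j)%g -> ([eta X with j |-> y] \o s) k = (X \o s) k.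
Proof. by move=> k ne; rewrite /= ifN //; apply: contra ne => /eqP <-; rewrite permK. Qed.

Lemma eta_perm_at (I : finType) (V : Type) (X : I -> V) j y (s : {perm I}) :
  ([eta X with j |-> y] \o s) (s^-1 j)%g = y.
Proof. by rewrite /= permKV eqxx. Qed.

Section ContactForm.
Variables (R : realType) (p : nat).
Local Notation n := p.*2.+1.
Variables (br : 'cV[R]_n -> 'cV[R]_n -> 'cV[R]_n) (w : 'rV[R]_n).
Hypothesis br_lie : is_lie_bracket br.

Definition contact_term (Z : 'I_n -> 'cV[R]_n) : R :=
  ev w (Z ord0) * \prod_(i < p) dform br w (Z (inord i.*2.+1)) (Z (inord i.*2.+2)).

Lemma dformE x y : dform br w x y = ev w (br y x).
Proof. by rewrite (brC br_lie y) evN. Qed.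

Lemma contact_top_formE X :
  contact_top_form br w X = \sum_(s : 'S_n) (-1) ^+ odd_perm s * contact_term (X \o s).
Proof. by []. Qed.

(* The slot [k0] occurs in exactly one factor of [contact_term]. *)
Lemma contact_term_slot Z k0 : exists C a x, forall Z',
  (forall k, k != k0 -> Z' k = Z k) ->
  contact_term Z' = C * ev w (a *: Z' k0 + br x (Z' k0)).
Proof.
pose f i := dform br w (Z (inord i.*2.+1)) (Z (inord i.*2.+2)).
have off Z' m : (forall k, k != k0 -> Z' k = Z k) -> (m < n)%N -> m != k0 ->
    Z' (inord m) = Z (inord m).
  by move=> agree lt_mn ne; apply: agree; rewrite -(inj_eq val_inj) /= inordK.
have [k0_0 | [i0 k0_i0]] := contact_slot_cases k0.
  exists (\prod_(i < p) f i), 1, 0 => Z' agree.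
  rewrite scale1r br0l // addr0 mulrC (_ : k0 = ord0); last exact: val_inj.
  congr (_ * _); apply: eq_bigr => i _.
  by have lt_i := ltn_ord i; rewrite /f !(off Z') //; lia.
have lt_i0 := ltn_ord i0.
have split_i0 Z' : (forall k, k != k0 -> Z' k = Z k) -> contact_term Z' =
    ev w (Z ord0) * \prod_(i < p | i != i0) f i *
    dform br w (Z' (inord i0.*2.+1)) (Z' (inord i0.*2.+2)).
  move=> agree; rewrite /contact_term (bigD1 i0) //= agree; last first.
    by rewrite -(inj_eq val_inj) /=; lia.
  rewrite [RHS]mulrAC -[RHS]mulrA; congr (_ * (_ * _)); apply: eq_bigr => i ne.
  have lt_i := ltn_ord i; have ne' : (i : nat) != i0 := ne.
  by rewrite /f !(off Z') //; lia.
have slot_i0 m : k0 = m :> nat -> (m < n)%N -> k0 = inord m.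
  by move=> k0_m lt_mn; apply: val_inj; rewrite /= inordK.
exists (ev w (Z ord0) * \prod_(i < p | i != i0) f i), 0.
case: k0_i0 => k0E.
  exists (Z (inord i0.*2.+2)) => Z' agree; rewrite split_i0 // scale0r add0r.
  rewrite -(slot_i0 _ k0E) ?(off Z') //; try lia.
  by rewrite dformE.
exists (- Z (inord i0.*2.+1)) => Z' agree; rewrite split_i0 // scale0r add0r.
rewrite -(slot_i0 _ k0E) ?(off Z') //; try lia.
by rewrite dformE (brC br_lie (Z' k0)) brNl // !evN.
Qed.

Local Notation T := (contact_top_form br w).

Lemma contact_top_form_lin X j a y z : T [eta X with j |-> a *: y + z] =
  a * T [eta X with j |-> y] + T [eta X with j |-> z].
Proof.
rewrite !contact_top_formE mulr_sumr -big_split; apply: eq_bigr => s _.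
have [C [b [x slot]]] := contact_term_slot (X \o s) (s^-1 j)%g.
rewrite !(slot _ (@eta_perm_off _ _ X j _ s)) !eta_perm_at /= br_linr //.
rewrite scalerDr !evD !evZ.
move: ((-1) ^+ _) => e; ring.
Qed.

Lemma contact_top_form_alt X i j : i != j -> X i = X j -> T X = 0.
Proof.
move=> ij Xij; pose t := tperm i j.
have Xt k : X (t k) = X k by rewrite /t; case: tpermP => // ->.
suff : T X = - T X by lra.
rewrite {1}contact_top_formE (reindex_inj (mulIg t)) contact_top_formE -sumrN.
apply: eq_bigr => s _; rewrite odd_permM odd_tperm ij signr_addb expr1 mulrN1 mulNr.
by congr (- (_ * contact_term _)); apply: functional_extensionality => k /=; rewrite permM Xt.
Qed.

Lemma contact_top_form_kernel X j k : ev w k = 0 -> (forall y, ev w (br k y) = 0) ->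
  T [eta X with j |-> k] = 0.
Proof.
move=> wk kw; rewrite contact_top_formE; apply: big1 => s _.
have [C [b [x slot]]] := contact_term_slot (X \o s) (s^-1 j)%g.
rewrite (slot _ (@eta_perm_off _ _ X j _ s)) eta_perm_at evD evZ wk (brC br_lie) evN kw.
by rewrite mulr0 oppr0 addr0 !mulr0.
Qed.

Lemma contact_kernel_eq0 k : is_contact_form br w ->
  ev w k = 0 -> (forall y, ev w (br k y) = 0) -> k = 0.
Proof.
case=> X TX wk kw; apply/eqP; apply: contraNT TX => k_neq0; apply/eqP.
apply: (alternating_form_eq0 contact_top_form_lin contact_top_form_alt k_neq0).
by move=> X' j; apply: contact_top_form_kernel.
Qed.

Lemma contact_radical v : is_contact_form br w -> v != 0 -> (forall x, br v x = 0) ->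
  forall x, (forall y, ev w (br x y) = 0) -> exists a, x = a *: v.
Proof.
move=> contact v_neq0 v_central x x_rad.
have v_rad y : ev w (br v y) = 0 by rewrite v_central ev0.
have [wv0 | wv_neq0] := eqVneq (ev w v) 0.
  by case/eqP: v_neq0; apply: contact_kernel_eq0.
exists (ev w x / ev w v); apply: (scalerI wv_neq0); rewrite scalerA mulrC divfK //.
apply/eqP; rewrite -subr_eq0; apply/eqP/contact_kernel_eq0 => [//||y].
  by rewrite evD evN !evZ mulrC subrr.
rewrite (brDl br_lie) (brNl br_lie) !(brZl br_lie) evD evN !evZ.
by rewrite x_rad v_rad !mulr0 subrr.
Qed.
End ContactForm.

Section SymplecticLieAlgebra.
Variables (R : realType) (m : nat) (br : 'cV[R]_m -> 'cV[R]_m -> 'cV[R]_m).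
Variable om : 'cV[R]_m -> 'cV[R]_m -> R.
Hypothesis br_lie : is_lie_bracket br.
Hypothesis om_linl : forall z a x y, om (a *: x + y) z = a * om x z + om y z.
Hypothesis om_skew : forall x y, om x y = - om y x.
Hypothesis om_closed : forall x y z, om (br x y) z + om (br y z) x + om (br z x) y = 0.
Hypothesis om_nondeg : forall x, (forall y, om x y = 0) -> x = 0.

Lemma om_linr z a x y : om z (a *: x + y) = a * om z x + om z y.
Proof. by rewrite om_skew om_linl !(om_skew z) mulrN opprD. Qed.

Lemma om_subl x y z : om (x - y) z = om x z - om y z.
Proof. exact: (@linB _ _ R^o (om^~ z) (om_linl z)). Qed.

Lemma om_subr x y z : om z (x - y) = om z x - om z y.
Proof. exact: (@linB _ _ R^o (om z) (om_linr z)). Qed.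

Lemma om_oppr x y : om x (- y) = - om x y.
Proof. exact: (@linN _ _ R^o (om x) (om_linr x)). Qed.

Lemma om_inj x y : (forall z, om x z = om y z) -> x = y.
Proof.
move=> xy; apply/eqP; rewrite -subr_eq0; apply/eqP/om_nondeg => z.
by rewrite om_subl xy subrr.
Qed.

Definition gram : 'M[R]_m := \matrix_(i, j) om (delta_mx i 0) (delta_mx j 0).

Lemma om_gram x y : om x y = \sum_j y j 0 * (x^T *m gram) 0 j.
Proof.
rewrite (lin_functionalE (om_linr x)); apply: eq_bigr => j _; congr (_ * _).
rewrite (lin_functionalE (om_linl _)) mxE; apply: eq_bigr => i _.
by rewrite !mxE.
Qed.

Lemma gram_unit : gram \in unitmx.
Proof.
rewrite unitmxE unitfE; apply/negP => /det0P [u u_neq0 uG0].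
suff /eqP : u^T = 0 by rewrite trmx_eq0 (negbTE u_neq0).
by apply: om_nondeg => y; rewrite om_gram trmxK uG0 big1 // => j _; rewrite mxE mulr0.
Qed.

Definition om_dual (f : 'cV[R]_m -> R) : 'cV[R]_m :=
  ((\row_j f (delta_mx j 0)) *m invmx gram)^T.

Lemma om_dualP f : (forall a x y, f (a *: x + y) = a * f x + f y) ->
  forall z, om (om_dual f) z = f z.
Proof.
move=> f_lin z; rewrite om_gram trmxK mulmxKV ?gram_unit // (lin_functionalE f_lin).
by apply: eq_bigr => j _; rewrite mxE.
Qed.

Definition sympl_nabla x y := om_dual (fun z => - om y (br x z)).

Lemma om_nabla x y z : om (sympl_nabla x y) z = - om y (br x z).
Proof. by apply: om_dualP => a u u'; rewrite br_linr // om_linr; ring. Qed.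

Lemma symplectic_admits_affine : admits_affine_structure br.
Proof.
exists sympl_nabla; split.
- move=> a x y z; apply: om_inj => u.
  by rewrite om_nabla om_linl !om_nabla br_linl // om_linr; ring.
- move=> a x y z; apply: om_inj => u.
  by rewrite !om_linl !om_nabla om_linl; ring.
- move=> x y; apply: om_inj => z.
  have := om_closed x y z; rewrite (om_skew (br y z)) (om_skew (br z x)).
  rewrite (brC br_lie z x) om_oppr om_subl !om_nabla; lra.
- move=> x y z; apply: om_inj => u.
  have jacobi : br (br x y) u = br x (br y u) - br y (br x u).
    have := br_jacobi br_lie x y u; rewrite (brC br_lie u x) brNr // (brC br_lie u).
    by move/eqP; rewrite subr_eq0 eq_sym => /eqP.
  by rewrite om_subl !om_nabla jacobi om_subr; lra.
Qed.
End SymplecticLieAlgebra.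

Lemma sum_nat_eq_mul (K : pzSemiRingType) (I : finType) (a : I) (f : I -> K) :
  \sum_c ((a == c)%:R * f c) = f a.
Proof.
rewrite (bigD1 a) //= eqxx mul1r big1 ?addr0 // => c /negbTE ca.
by rewrite eq_sym ca mul0r.
Qed.

Section LineQuotient.
Variables (K : fieldType) (m : nat) (v : 'cV[K]_m.+1) (i0 : 'I_m.+1).
Hypothesis v_i0 : v i0 0 != 0.

Definition line_proj : 'M[K]_(m, m.+1) := \matrix_(r, c)
  ((lift i0 r == c)%:R - (i0 == c)%:R * (v (lift i0 r) 0 / v i0 0)).
Definition line_sect : 'M[K]_(m.+1, m) := \matrix_(c, r) (c == lift i0 r)%:R.

Lemma line_projE (x : 'cV[K]_m.+1) r :
  (line_proj *m x) r 0 = x (lift i0 r) 0 - v (lift i0 r) 0 / v i0 0 * x i0 0.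
Proof.
rewrite mxE; under eq_bigr => c _ do rewrite mxE mulrBl -mulrA.
by rewrite sumrB !sum_nat_eq_mul mulrC.
Qed.

Lemma line_proj_sect : line_proj *m line_sect = 1%:M.
Proof.
apply/matrixP => r r'.
have -> : (line_proj *m line_sect) r r' = (line_proj *m col r' line_sect) r 0.
  by rewrite !mxE; apply: eq_bigr => c _; rewrite [col _ _ _ _]mxE.
rewrite line_projE !mxE (inj_eq lift_inj) eq_sym.
by rewrite (negbTE (neq_lift i0 r')) mulr0 subr0.
Qed.

Lemma line_proj_ker (x : 'cV[K]_m.+1) : line_proj *m x = 0 <-> exists a, x = a *: v.
Proof.
split=> [x_ker | [a ->]]; last first.
  by apply/matrixP => r k; rewrite (ord1 k) line_projE !mxE; field.
exists (x i0 0 / v i0 0); apply/matrixP => c k; rewrite (ord1 k) !mxE.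
have [r -> | ->] := unliftP i0 c; last by rewrite divfK.
have /matrixP/(_ r 0)/eqP := x_ker; rewrite line_projE mxE subr_eq0 => /eqP ->.
ring.
Qed.
End LineQuotient.

Lemma exists_line_quotient (K : fieldType) m (v : 'cV[K]_m.+1) : v != 0 ->
  exists (A : 'M_(m, m.+1)) (S : 'M_(m.+1, m)),
    A *m S = 1%:M /\ forall x, A *m x = 0 <-> exists a, x = a *: v.
Proof.
move=> v_neq0; have [i0 v_i0] : exists i0, v i0 0 != 0.
  apply/existsP; apply: contraR v_neq0 => /existsPn v0.
  by apply/eqP/matrixP => i k; rewrite (ord1 k) mxE; apply/eqP/negPn/v0.
exists (line_proj v i0), (line_sect K i0).
by split; [exact: line_proj_sect | exact: line_proj_ker].
Qed.

Section CentralQuotient.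
Variables (R : realType) (n m : nat) (br : 'cV[R]_n -> 'cV[R]_n -> 'cV[R]_n).
Variables (A : 'M[R]_(m, n)) (S : 'M[R]_(n, m)) (v : 'cV[R]_n).
Hypothesis br_lie : is_lie_bracket br.
Hypothesis AS1 : A *m S = 1%:M.
Hypothesis A_ker : forall x, A *m x = 0 <-> exists a, x = a *: v.
Hypothesis v_central : forall x, br v x = 0.

Lemma sect_proj x : exists b, S *m (A *m x) = x + b *: v.
Proof.
have /A_ker [b bE] : A *m (S *m (A *m x) - x) = 0.
  by rewrite mulmxBr !mulmxA AS1 mul1mx subrr.
by exists b; rewrite -bE addrC subrK.
Qed.

Lemma br_sect_projl x y : br (S *m (A *m x)) y = br x y.
Proof. by have [b ->] := sect_proj x; rewrite brDl // brZl // v_central scaler0 addr0. Qed.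

Lemma br_sect_projr x y : br y (S *m (A *m x)) = br y x.
Proof. by rewrite (brC br_lie) br_sect_projl -(brC br_lie). Qed.

Definition quot_br (a b : 'cV[R]_m) : 'cV[R]_m := A *m br (S *m a) (S *m b).

Lemma quot_br_morph x y : A *m br x y = quot_br (A *m x) (A *m y).
Proof. by rewrite /quot_br br_sect_projl br_sect_projr. Qed.

Lemma quot_br_lie : is_lie_bracket quot_br.
Proof.
split=> [a x y z | a x y z | x | x y z]; rewrite /quot_br.
- by rewrite mulmxDr -scalemxAr br_linl // mulmxDr -scalemxAr.
- by rewrite mulmxDr -scalemxAr br_linr // mulmxDr -scalemxAr.
- by rewrite brxx // mulmx0.
- by rewrite !br_sect_projr -!mulmxDr br_jacobi // mulmx0.
Qed.

Variable w : 'rV[R]_n.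
Hypothesis w_rad : forall x, (forall y, ev w (br x y) = 0) -> exists a, x = a *: v.

Definition quot_form (a b : 'cV[R]_m) : R := ev w (br (S *m a) (S *m b)).

Lemma quot_admits_affine : admits_affine_structure quot_br.
Proof.
apply: (@symplectic_admits_affine _ _ _ quot_form quot_br_lie).
- by move=> z a x y; rewrite /quot_form mulmxDr -scalemxAr br_linl // evD evZ.
- by move=> x y; rewrite /quot_form (brC br_lie) evN.
- move=> x y z; rewrite /quot_form /quot_br !br_sect_projl.
  have := congr1 (ev w) (br_jacobi br_lie (S *m x) (S *m y) (S *m z)).
  by rewrite ev0 !evD !(brC br_lie (br _ _)) !evN; lra.
- move=> x x_rad.
  have /w_rad [a Sx] : forall y, ev w (br (S *m x) y) = 0.
    by move=> y; rewrite -(br_sect_projr y (S *m x)); apply: x_rad.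
  by rewrite -[x]mul1mx -AS1 -mulmxA Sx; apply/A_ker; exists a.
Qed.
End CentralQuotient.

Theorem mainTheorem2 (R : realType) (p : nat)
    (br : 'cV[R]_(p.*2.+1) -> 'cV[R]_(p.*2.+1) -> 'cV[R]_(p.*2.+1))
    (w : 'rV[R]_(p.*2.+1)) :
  is_lie_bracket br -> is_nilpotent br -> is_contact_form br w ->
  exists (m : nat) (brh : 'cV[R]_m -> 'cV[R]_m -> 'cV[R]_m)
         (A : 'M[R]_(m, p.*2.+1)) (v : 'cV[R]_(p.*2.+1)),
    [/\ is_lie_bracket brh,
        v != 0 /\ (forall x, br v x = 0),
        (forall x : 'cV[R]_(p.*2.+1), A *m x = 0 <-> (exists a : R, x = a *: v)),
        (forall y : 'cV[R]_m, (exists x : 'cV[R]_(p.*2.+1), A *m x = y)) /\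
        (forall x y, A *m br x y = brh (A *m x) (A *m y)) &
        admits_affine_structure brh].
Proof.
move=> br_lie br_nil contact.
have [v [v_neq0 v_central]] := nilpotent_center_neq0 br_lie br_nil.
have w_rad := contact_radical br_lie contact v_neq0 v_central.
have [A [S [AS1 A_ker]]] := exists_line_quotient v_neq0.
exists p.*2, (quot_br br A S), A, v; split=> //.
- exact: quot_br_lie.
- split=> [y | x y]; last exact: quot_br_morph.
  by exists (S *m y); rewrite mulmxA AS1 mul1mx.
- exact: quot_admits_affine w_rad.
Qed.
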